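(* For $i=0,1,2,\dots$ let $D_i=\{(v_0,\dots,v_i)\in\mathbb{R}^{i+1}:\ 0\le v_i\le\cdots\le v_0\}$, and let $\varphi_i:D_i\to\mathbb{R}$ be functions that are positive and do not exceed $1$ on $D_i$. Suppose there exist functions $\psi_i:D_i\to\mathbb{R}$ with $$0<\psi_i(v_0,\dots,v_i)\le\varphi_i(v_0,\dots,v_i)\le 1\quad\text{on } D_i,\qquad i=0,1,2,\dots,$$ which are monotone decreasing in the set of their arguments, i.e. $v_0\le u_0,\dots,v_i\le u_i$ implies $\psi_i(v_0,\dots,v_i)\ge\psi_i(u_0,\dots,u_i)$. Let $\{V_i\}_{i=0}^\infty$ be a positive numeric sequence defined recurrently by $$V_{i+1}-V_i=-\varphi_i(V_0,\dots,V_i)\,V_i,\qquad i=0,1,2,\dots$$ Then the sequence $\{U_i\}_{i=0}^\infty$ defined by $U_0=V_0$ and $$U_{i+1}-U_i=-\psi_i(U_0,\dots,U_i)\,U_i,\qquad i=0,1,2,\dots$$ is majorizing: $V_i\le U_i$ for all $i=1,2,3,\dots$ *)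

From mathcomp Require Import all_boot all_order all_algebra.
From mathcomp Require Import reals.
Set Implicit Arguments. Unset Strict Implicit. Unset Printing Implicit Defensive.
Import Order.TTheory GRing.Theory Num.Theory.
Local Open Scope ring_scope.

(* A point (v_0,...,v_i) of R^{i+1} is a function 'I_i.+1 -> R.
   D_i = { v : 0 <= v_i <= v_{i-1} <= ... <= v_0 }. *)
Definition inD (R : realType) (i : nat) (v : 'I_i.+1 -> R) : Prop :=
  0 <= v ord_max /\ forall j k : 'I_i.+1, (j <= k)%N -> v k <= v j.

Definition seqpre (R : realType) (x : nat -> R) (i : nat) : 'I_i.+1 -> R :=
  fun k => x (nat_of_ord k).
Arguments seqpre {R} x i _.

From mathcomp Require Import all_boot all_order all_algebra.
From mathcomp Require Import reals.
Import Order.TTheory GRing.Theory Num.Theory.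
Local Open Scope ring_scope.

(* Writing the recurrences as [V (i+1) = (1 - phi_i) V i] and [U (i+1) = (1 - psi_i) U i],
   an induction on i shows at once that both sequences are nonincreasing and nonnegative
   (so their prefixes lie in D_i) and that V <= U.  Given V_k <= U_k for k <= i,
   monotonicity of psi_i gives psi_i(U) <= psi_i(V) <= phi_i(V) <= 1, hence
   0 <= 1 - phi_i(V) <= 1 - psi_i(U), and multiplying by 0 < V_i <= U_i yields
   V_(i+1) <= U_(i+1). *)

Lemma eq_1BM_of_subr_eqNM {R : comPzRingType} {y x a : R} :
  y - x = - a * x -> y = (1 - a) * x.
Proof. by move/eqP; rewrite subr_eq => /eqP ->; rewrite mulrBl mul1r mulNr addrC. Qed.

Lemma mulr_1Bl_le {R : numDomainType} (a x : R) :
  0 <= a -> 0 <= x -> (1 - a) * x <= x.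
Proof. by move=> a_ge0 x_ge0; rewrite mulrBl mul1r gerBl mulr_ge0. Qed.

Lemma seqpre_inD {R : realType} {x : nat -> R} {i : nat} :
  (forall n, (n < i)%N -> x n.+1 <= x n) -> 0 <= x i -> inD (seqpre x i).
Proof.
move=> x_noninc x_ge0; split=> // j k jk.
have x_homo : {in [pred n | (n <= i)%N] &, {homo x : m n / (m <= n)%N >-> n <= m}}.
  apply: homo_leq_in => [y|y z t zy ty|m n _ ni l /andP[_ ln]|m _ mi].
  - exact: lexx.
  - exact: le_trans ty zy.
  - exact: ltnW (leq_trans ln ni).
  - exact: x_noninc.
by apply: x_homo; rewrite // inE -ltnS.
Qed.

Section Majorant.

Context {R : realType} {phi psi : forall i : nat, ('I_i.+1 -> R) -> R} {V U : nat -> R}.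
Hypotheses (phi_pos : forall i v, inD v -> 0 < phi i v)
  (phi_le1 : forall i v, inD v -> phi i v <= 1)
  (psi_pos : forall i v, inD v -> 0 < psi i v)
  (psi_le_phi : forall i v, inD v -> psi i v <= phi i v)
  (psi_mono : forall i (v u : 'I_i.+1 -> R), inD v -> inD u ->
      (forall k, v k <= u k) -> psi i u <= psi i v)
  (V_pos : forall i, 0 < V i)
  (V_rec : forall i, V i.+1 - V i = - phi i (seqpre V i) * V i)
  (U0 : U 0%N = V 0%N)
  (U_rec : forall i, U i.+1 - U i = - psi i (seqpre U i) * U i).

Lemma V_nonincreasing n : V n.+1 <= V n.
Proof.
elim/ltn_ind: n => n IH.
have DV : inD (seqpre V n) by apply: seqpre_inD => [m /IH|]; last exact: ltW.
rewrite (eq_1BM_of_subr_eqNM (V_rec n)) mulr_1Bl_le ?ltW //.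
exact: phi_pos.
Qed.

Lemma majorant_step n :
    (forall m, (m <= n)%N -> V m <= U m) ->
    (forall m, (m < n)%N -> U m.+1 <= U m) ->
  V n.+1 <= U n.+1 /\ U n.+1 <= U n.
Proof.
move=> V_le_U U_noninc.
have Un_ge0 : 0 <= U n := le_trans (ltW (V_pos n)) (V_le_U n (leqnn n)).
have DU : inD (seqpre U n) by apply: seqpre_inD.
have DV : inD (seqpre V n).
  by apply: seqpre_inD => [m _|]; [exact: V_nonincreasing | exact: ltW].
have psiU_le_phiV : psi n (seqpre U n) <= phi n (seqpre V n).
  apply: le_trans (psi_le_phi _ _ DV); apply: psi_mono => // k.
  by apply: V_le_U; rewrite -ltnS.
rewrite (eq_1BM_of_subr_eqNM (V_rec n)) (eq_1BM_of_subr_eqNM (U_rec n)).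
split; last by rewrite mulr_1Bl_le // ltW ?psi_pos.
apply: ler_pM.
- by rewrite subr_ge0 phi_le1.
- exact: ltW.
- exact: lerB.
- exact: V_le_U.
Qed.

Lemma majorant_invariant n :
  (forall m, (m <= n)%N -> V m <= U m) /\ (forall m, (m < n)%N -> U m.+1 <= U m).
Proof.
elim: n => [|n [V_le_U U_noninc]].
  by split=> // m; rewrite leqn0 => /eqP ->; rewrite U0.
have [VU_succ U_succ] := majorant_step n V_le_U U_noninc.
split=> m; rewrite ?ltnS leq_eqVlt => /orP[/eqP -> // | lt_mn].
  exact: V_le_U.
exact: U_noninc.
Qed.

End Majorant.

Theorem lemma2 (R : realType)
  (phi psi : forall i : nat, ('I_i.+1 -> R) -> R) (V U : nat -> R)
  (phi_pos : forall i v, inD v -> 0 < phi i v)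
  (phi_le1 : forall i v, inD v -> phi i v <= 1)
  (psi_pos : forall i v, inD v -> 0 < psi i v)
  (psi_le_phi : forall i v, inD v -> psi i v <= phi i v)
  (psi_mono : forall i (v u : 'I_i.+1 -> R), inD v -> inD u ->
      (forall k, v k <= u k) -> psi i u <= psi i v)
  (V_pos : forall i, 0 < V i)
  (V_rec : forall i, V i.+1 - V i = - phi i (seqpre V i) * V i)
  (U0 : U 0%N = V 0%N)
  (U_rec : forall i, U i.+1 - U i = - psi i (seqpre U i) * U i) :
  forall i : nat, (1 <= i)%N -> V i <= U i.
Proof.
move=> i _.
have [V_le_U _] := majorant_invariant phi_pos phi_le1 psi_pos psi_le_phi psi_mono
  V_pos V_rec U0 U_rec i.
exact: V_le_U.
Qed.
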